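(* Let $\alpha=[a_0;a_1,a_2,\dots]$ be irrational with convergents $p_k/q_k$, and let $N=\sum_{k=0}^{K-1} b_k q_k$ be the Ostrowski expansion of a non-negative integer. For any $k \ge 0$ such that $b_k \ge 1$, \[ -1 < -q_k \| q_k \alpha \| + q_k \| q_{k+1} \alpha \| \le \varepsilon_k (N) \le q_k \| q_{k+1} \alpha \| < \frac{1}{2} . \] If $b_{k+1} \le (1-\delta ) a_{k+2}$ with some $\delta >0$, then $\varepsilon_k (N) \ge -(1-\delta /3) q_k \| q_k \alpha \|$. If moreover $\frac{\log a_j}{a_{j+1}}\le T$ for all $j\ge k_0$ with constants $k_0,T\ge1$, then $\varepsilon_k (N) \ge -\left(1-\frac{1}{e^T+2}\right)$ for any $k \ge k_0$ such that $b_k \ge 1$.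
   Context: $p_k/q_k=[a_0;a_1,\dots,a_k]$, with $q_0=1,q_1=a_1$, $q_{k+1}=a_{k+1}q_k+q_{k-1}$. $\|y\|$ denotes distance to the nearest integer. The Ostrowski expansion of $N\ge0$ is the unique representation $N=\sum_{k=0}^{K-1}b_kq_k$ with integers $0\le b_0<a_1$, $0\le b_k\le a_{k+1}$, and $b_{k-1}=0$ whenever $b_k=a_{k+1}$ (coefficients $b_k$ with $k\ge K$ are $0$). For such $N$, $\varepsilon_k(N):=q_k\sum_{\ell=k+1}^{K-1}(-1)^{k+\ell}b_\ell\|q_\ell\alpha\|$. *)

From Stdlib Require Import Reals ZArith Lia Lra.
Open Scope R_scope.

(* floor of a real as an integer: up x is the unique integer with x < up x <= x+1 *)
Definition Zfloor (x : R) : Z := (up x - 1)%Z.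

Definition ndist (y : R) : R :=
  Rmin (y - IZR (Zfloor y)) (IZR (Zfloor y) + 1 - y).

(* complete quotients of the continued fraction of alpha (Gauss map iteration):
   x_0 = alpha, x_{k+1} = 1 / (x_k - floor x_k) *)
Fixpoint cf_x (alpha : R) (k : nat) : R :=
  match k with
  | O => alpha
  | S k' => / (cf_x alpha k' - IZR (Zfloor (cf_x alpha k')))
  end.

Definition cf_a (alpha : R) (k : nat) : Z := Zfloor (cf_x alpha k).

(* pairs (q_k, q_{k+1}) with q_0 = 1, q_1 = a_1, q_{k+1} = a_{k+1} q_k + q_{k-1} *)
Fixpoint cf_qpair (alpha : R) (k : nat) : Z * Z :=
  match k with
  | O => (1%Z, cf_a alpha 1)
  | S k' => let (x, y) := cf_qpair alpha k' in
            (y, (cf_a alpha (S (S k')) * y + x)%Z)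
  end.

Definition cf_q (alpha : R) (k : nat) : Z := fst (cf_qpair alpha k).

Fixpoint rsum (f : nat -> R) (m n : nat) : R :=
  match n with
  | O => 0
  | S n' => f m + rsum f (S m) n'
  end.

Definition irrational (alpha : R) : Prop :=
  ~ exists p q : Z, q <> 0%Z /\ alpha = IZR p / IZR q.

Definition is_ostrowski (alpha : R) (N K : nat) (b : nat -> nat) : Prop :=
  INR N = rsum (fun k => INR (b k) * IZR (cf_q alpha k)) 0%nat K /\
  (Z.of_nat (b O) < cf_a alpha 1)%Z /\
  (forall k, (Z.of_nat (b k) <= cf_a alpha (S k))%Z) /\
  (forall k, (1 <= k)%nat -> Z.of_nat (b k) = cf_a alpha (S k) -> b (k - 1)%nat = 0%nat) /\
  (forall k, (K <= k)%nat -> b k = 0%nat).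

Definition ost_eps (alpha : R) (K : nat) (b : nat -> nat) (k : nat) : R :=
  IZR (cf_q alpha k) *
  rsum (fun l => (-1) ^ (k + l) * INR (b l) * ndist (IZR (cf_q alpha l) * alpha))
       (S k) (K - S k).

(** Write [theta_{k+1} = 1/(x_1 ... x_{k+1})] for the complete quotients [x_j] of
    alpha.  Then [q_k alpha - p_k = (-1)^k theta_{k+1}], so [||q_k alpha|| = theta_{k+1}]
    whenever [theta_{k+1} <= 1/2], and [theta_k = a_{k+1} theta_{k+1} + theta_{k+2}],
    [q_{k+1} theta_{k+1} + q_k theta_{k+2} = 1].  Since every Ostrowski digit satisfies
    [b_l <= a_{l+1}], the recurrence gives [b_l theta_{l+1} + theta_{l+2} <= theta_l], and
    an induction on the length of the alternating sum defining [eps_k(N)] traps it between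
    [-q_k (b_{k+1} theta_{k+2} + theta_{k+3})] and [q_k theta_{k+2}].  If [b_k >= 1] the
    Ostrowski rule forces [b_{k+1} < a_{k+2}], turning the lower bound into
    [-q_k (theta_{k+1} - theta_{k+2})].  Finally [q_k theta_{k+1} <= 1/2] when
    [a_{k+1} >= 2], while for [k >= 1] the bound [q_k <= (a_k + 1) q_{k-1}] gives
    [q_k theta_{k+1} < (a_k + 1)/(a_k + 2)]; when [a_{k+1} = 1] the hypothesis
    on [log a_k / a_{k+1}] says [a_k <= e^T]. *)

From Stdlib Require Import Reals ZArith Lia Lra.
(* Imported after Reals, so that [Zfloor] denotes [Defs.Zfloor] rather than Stdlib's copy. *)
From Pilot Require Import Defs.
Open Scope R_scope.

Lemma Zfloor_spec x : IZR (Zfloor x) <= x < IZR (Zfloor x) + 1.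
Proof. unfold Zfloor; destruct (archimed x); rewrite minus_IZR; lra. Qed.

Lemma Zfloor_unique x n : IZR n <= x < IZR n + 1 -> Zfloor x = n.
Proof.
  intros H; unfold Zfloor.
  rewrite <- (tech_up x (n + 1)); [ring | |]; rewrite plus_IZR; lra.
Qed.

Definition rational (y : R) : Prop := exists p q : Z, q <> 0%Z /\ y = IZR p / IZR q.

Lemma rational_IZR n : rational (IZR n).
Proof. exists n, 1%Z; split; [lia | field]. Qed.

Lemma rational_of_inv_sub_IZR y n : rational (/ (y - IZR n)) -> rational y.
Proof.
  intros [p [q [Hq E]]].
  destruct (Req_dec (y - IZR n) 0) as [H0 | H0].
  { replace y with (IZR n) by lra; apply rational_IZR. }
  assert (Hp : IZR p <> 0).
  { intros Hp; rewrite Hp in E; unfold Rdiv in E; rewrite Rmult_0_l in E.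
    exact (Rinv_neq_0_compat _ H0 E). }
  apply not_0_IZR in Hq.
  assert (Hy : y - IZR n = IZR q / IZR p).
  { rewrite <- (Rinv_inv (y - IZR n)), E; field; auto. }
  exists (n * p + q)%Z, p; split; [intros ->; apply Hp; reflexivity |].
  rewrite plus_IZR, mult_IZR; replace y with (IZR n + IZR q / IZR p) by lra.
  field; exact Hp.
Qed.

Lemma ndist_IZR_add p s : Rabs s <= 1 / 2 -> ndist (IZR p + s) = Rabs s.
Proof.
  intros H; unfold ndist; destruct (Rle_lt_dec 0 s).
  - rewrite Rabs_pos_eq in * by lra.
    rewrite (Zfloor_unique _ p), Rmin_left by lra; ring.
  - rewrite Rabs_left in * by lra.
    rewrite (Zfloor_unique _ (p - 1)) by (rewrite minus_IZR; lra).
    rewrite minus_IZR, Rmin_right by lra; ring.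
Qed.

Section ContinuedFraction.

Variable a : R.
Hypothesis Ha : irrational a.

Lemma cf_x_irrational k : ~ rational (cf_x a k).
Proof.
  induction k as [| k IH]; [exact Ha |].
  intros Hr; exact (IH (rational_of_inv_sub_IZR _ (cf_a a k) Hr)).
Qed.

Lemma cf_frac_bounds k : 0 < cf_x a k - IZR (cf_a a k) < 1.
Proof.
  destruct (Zfloor_spec (cf_x a k)) as [Hle Hlt]; unfold cf_a.
  destruct (Rle_lt_or_eq_dec _ _ Hle) as [Hgt | E].
  - lra.
  - destruct (cf_x_irrational k); rewrite <- E; apply rational_IZR.
Qed.

Lemma cf_x_gt1 k : 1 < cf_x a (S k).
Proof.
  pose proof (cf_frac_bounds k).
  change (cf_x a (S k)) with (/ (cf_x a k - IZR (cf_a a k))).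
  rewrite <- Rinv_1 at 1; apply Rinv_lt_contravar; lra.
Qed.

Lemma cf_a_ge1 k : 1 <= IZR (cf_a a (S k)).
Proof.
  pose proof (cf_x_gt1 k); pose proof (Zfloor_spec (cf_x a (S k))).
  assert (0 < cf_a a (S k))%Z by (apply lt_IZR; unfold cf_a; lra).
  apply IZR_le; lia.
Qed.

(* [cf_theta a (S k)] is [|q_k alpha - p_k|] (see [cf_q_approx]); [cf_theta a 0 = 1]
   plays the role of [|q_{-1} alpha - p_{-1}|]. *)
Fixpoint cf_theta (n : nat) : R :=
  match n with
  | O => 1
  | S k => cf_theta k / cf_x a (S k)
  end.

Lemma cf_theta_pos n : 0 < cf_theta n.
Proof.
  induction n as [| n IH]; cbn [cf_theta]; [lra |].
  pose proof (cf_x_gt1 n); apply Rdiv_lt_0_compat; lra.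
Qed.

Lemma cf_theta_rec k :
  cf_theta k = IZR (cf_a a (S k)) * cf_theta (S k) + cf_theta (S (S k)).
Proof.
  pose proof (cf_x_gt1 k); pose proof (cf_frac_bounds (S k)).
  cbn [cf_theta].
  change (cf_x a (S (S k))) with (/ (cf_x a (S k) - IZR (cf_a a (S k)))).
  field; lra.
Qed.

Lemma cf_theta_lt n : cf_theta (S n) < cf_theta n.
Proof.
  rewrite (cf_theta_rec n).
  pose proof (cf_a_ge1 n); pose proof (cf_theta_pos (S n)); pose proof (cf_theta_pos (S (S n))).
  nra.
Qed.

Lemma cf_q_rec k : cf_q a (S (S k)) = (cf_a a (S (S k)) * cf_q a (S k) + cf_q a k)%Z.
Proof. unfold cf_q; cbn [cf_qpair]; destruct (cf_qpair a k); reflexivity. Qed.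

Lemma cf_q_mono k : 1 <= IZR (cf_q a k) <= IZR (cf_q a (S k)).
Proof.
  induction k as [| k IH].
  - pose proof (cf_a_ge1 0); change (cf_q a 1) with (cf_a a 1); change (cf_q a 0) with 1%Z; lra.
  - rewrite cf_q_rec, plus_IZR, mult_IZR; pose proof (cf_a_ge1 (S k)); nra.
Qed.

Lemma cf_q_le_succ k : IZR (cf_q a (S k)) <= (IZR (cf_a a (S k)) + 1) * IZR (cf_q a k).
Proof.
  destruct k as [| k].
  - change (cf_q a 1) with (cf_a a 1); change (cf_q a 0) with 1%Z; lra.
  - rewrite cf_q_rec, plus_IZR, mult_IZR; pose proof (cf_q_mono k); lra.
Qed.

Lemma cf_q_theta_det k :
  IZR (cf_q a (S k)) * cf_theta (S k) + IZR (cf_q a k) * cf_theta (S (S k)) = 1.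
Proof.
  induction k as [| k IH].
  - change (cf_q a 1) with (cf_a a 1); change (cf_q a 0) with 1%Z.
    transitivity (cf_theta 0); [rewrite (cf_theta_rec 0); simpl IZR; ring | reflexivity].
  - rewrite cf_q_rec, plus_IZR, mult_IZR, <- IH, (cf_theta_rec (S k)); ring.
Qed.

Lemma cf_q_approx_pair k :
  (exists p : Z, IZR (cf_q a k) * a - IZR p = (-1) ^ k * cf_theta (S k)) /\
  (exists p : Z, IZR (cf_q a (S k)) * a - IZR p = (-1) ^ S k * cf_theta (S (S k))).
Proof.
  assert (H1 : cf_theta 1 = a - IZR (cf_a a 0)).
  { cbn [cf_theta]; change (cf_x a 1) with (/ (a - IZR (cf_a a 0))).
    unfold Rdiv; rewrite Rinv_inv; ring. }
  induction k as [| k [[p0 H0] [p1 H1']]].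
  - split; [exists (cf_a a 0); rewrite H1; change (IZR (cf_q a 0)) with 1; ring |].
    exists (cf_a a 1 * cf_a a 0 + 1)%Z; change (cf_q a 1) with (cf_a a 1).
    rewrite plus_IZR, mult_IZR.
    replace (cf_theta 2) with (cf_theta 0 - IZR (cf_a a 1) * cf_theta 1)
      by (rewrite (cf_theta_rec 0); ring).
    rewrite H1; change (cf_theta 0) with 1; ring.
  - split; [exists p1; exact H1' |].
    exists (cf_a a (S (S k)) * p1 + p0)%Z.
    rewrite cf_q_rec, !plus_IZR, !mult_IZR.
    replace (cf_theta (S (S (S k))))
      with (cf_theta (S k) - IZR (cf_a a (S (S k))) * cf_theta (S (S k)))
      by (rewrite (cf_theta_rec (S k)); ring).
    transitivity (IZR (cf_a a (S (S k))) * (IZR (cf_q a (S k)) * a - IZR p1)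
                  + (IZR (cf_q a k) * a - IZR p0)); [ring |].
    rewrite H0, H1'; simpl; ring.
Qed.

Lemma cf_q_approx k : exists p : Z, IZR (cf_q a k) * a - IZR p = (-1) ^ k * cf_theta (S k).
Proof. exact (proj1 (cf_q_approx_pair k)). Qed.

Lemma ndist_cf_q_of_le_half k :
  cf_theta (S k) <= 1 / 2 -> ndist (IZR (cf_q a k) * a) = cf_theta (S k).
Proof.
  intros Hh; destruct (cf_q_approx k) as [p Hp].
  assert (Habs : Rabs ((-1) ^ k * cf_theta (S k)) = cf_theta (S k)).
  { rewrite Rabs_mult, pow_1_abs, Rabs_pos_eq; [ring | apply Rlt_le, cf_theta_pos]. }
  replace (IZR (cf_q a k) * a) with (IZR p + (-1) ^ k * cf_theta (S k)) by lra.
  rewrite ndist_IZR_add; rewrite Habs; lra.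
Qed.

Lemma cf_q_mul_theta_le1 k : IZR (cf_q a k) * cf_theta k <= 1.
Proof.
  destruct k as [| k]; [change (IZR (cf_q a 0) * cf_theta 0) with (1 * 1); lra |].
  rewrite <- (cf_q_theta_det k).
  pose proof (cf_q_mono k); pose proof (cf_theta_pos (S (S k))); nra.
Qed.

Lemma cf_q_mul_theta_lt1 k : IZR (cf_q a k) * cf_theta (S k) < 1.
Proof.
  pose proof (cf_q_mul_theta_le1 k); pose proof (cf_theta_lt k); pose proof (cf_q_mono k).
  nra.
Qed.

Lemma cf_q_mul_theta_lt_half k : IZR (cf_q a k) * cf_theta (S (S k)) < 1 / 2.
Proof.
  pose proof (cf_q_theta_det k); pose proof (cf_q_mono k).
  pose proof (cf_theta_lt (S k)); pose proof (cf_theta_pos (S (S k))).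
  nra.
Qed.

Lemma ndist_cf_q k : (1 <= k)%nat -> ndist (IZR (cf_q a k) * a) = cf_theta (S k).
Proof.
  intros Hk; apply ndist_cf_q_of_le_half; destruct k as [| k]; [lia |].
  pose proof (cf_q_mul_theta_lt_half k); pose proof (cf_q_mono k);
    pose proof (cf_theta_pos (S (S k))).
  nra.
Qed.

Lemma ndist_cf_q0 : (2 <= cf_a a 1)%Z -> ndist (IZR (cf_q a 0) * a) = cf_theta 1.
Proof.
  intros H2; apply ndist_cf_q_of_le_half; apply IZR_le in H2.
  destruct (Zfloor_spec (cf_x a 1)); cbn [cf_theta].
  unfold cf_a in H2; apply (Rmult_le_reg_r (cf_x a 1)); [lra |].
  field_simplify; lra.
Qed.

Lemma cf_q_mul_theta_le_half k :
  (2 <= cf_a a (S k))%Z -> IZR (cf_q a k) * cf_theta (S k) <= 1 / 2.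
Proof.
  intros H2; apply IZR_le in H2.
  pose proof (cf_q_mul_theta_le1 k); pose proof (cf_theta_rec k); pose proof (cf_q_mono k).
  pose proof (cf_theta_pos (S k)); pose proof (cf_theta_pos (S (S k))).
  nra.
Qed.

Lemma cf_q_mul_theta_lt_ratio k :
  IZR (cf_q a (S k)) * cf_theta (S (S k)) * (IZR (cf_a a (S k)) + 2) < IZR (cf_a a (S k)) + 1.
Proof.
  pose proof (cf_q_mono k); pose proof (cf_theta_lt (S k)); pose proof (cf_theta_pos (S (S k))).
  pose proof (cf_a_ge1 k); pose proof (cf_q_le_succ k); pose proof (cf_q_theta_det k).
  set (c := IZR (cf_a a (S k))) in *; set (u := cf_theta (S (S k))) in *.
  assert (Hsum : (IZR (cf_q a (S k)) + IZR (cf_q a k)) * u < 1) by nra.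
  assert (Hq : IZR (cf_q a (S k)) * u <= (c + 1) * IZR (cf_q a k) * u).
  { apply Rmult_le_compat_r; lra. }
  assert (0 < c + 1) by lra.
  assert ((c + 1) * ((IZR (cf_q a (S k)) + IZR (cf_q a k)) * u) < (c + 1) * 1)
    by (apply Rmult_lt_compat_l; lra).
  lra.
Qed.

Lemma cf_q_mul_theta_le_exp k T :
  (1 <= k)%nat -> ln (IZR (cf_a a k)) / IZR (cf_a a (S k)) <= T ->
  IZR (cf_q a k) * cf_theta (S k) <= 1 - 1 / (exp T + 2).
Proof.
  intros Hk HT; pose proof (exp_pos T).
  destruct (Z_lt_le_dec 1 (cf_a a (S k))) as [H2 | H1].
  - pose proof (cf_q_mul_theta_le_half k ltac:(lia)).
    assert (1 / (exp T + 2) <= 1 / 2)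
      by (unfold Rdiv; rewrite !Rmult_1_l; apply Rinv_le_contravar; lra).
    lra.
  - destruct k as [| j]; [lia |].
    pose proof (cf_a_ge1 j); pose proof (cf_q_mul_theta_lt_ratio j).
    assert (E1 : cf_a a (S (S j)) = 1%Z) by (pose proof (le_IZR _ _ (cf_a_ge1 (S j))); lia).
    rewrite E1, Rdiv_1_r in HT.
    set (c := IZR (cf_a a (S j))) in *.
    assert (Hc : c <= exp T).
    { rewrite <- (exp_ln c) by lra.
      destruct (Rle_lt_or_eq_dec _ _ HT) as [Hlt | ->]; [left; apply exp_increasing |]; lra. }
    assert (1 / (exp T + 2) <= 1 / (c + 2))
      by (unfold Rdiv; rewrite !Rmult_1_l; apply Rinv_le_contravar; lra).
    assert (IZR (cf_q a (S j)) * cf_theta (S (S j)) <= 1 - 1 / (c + 2)).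
    { apply (Rmult_le_reg_r (c + 2)); [lra |].
      replace ((1 - 1 / (c + 2)) * (c + 2)) with (c + 1) by (field; lra); lra. }
    lra.
Qed.

End ContinuedFraction.

Lemma rsum_sign_shift (f g : nat -> R) c m n :
  rsum (fun l => (-1) ^ (S c + l) * f l * g l) m n
  = - rsum (fun l => (-1) ^ (c + l) * f l * g l) m n.
Proof.
  revert m; induction n as [| n IH]; intros m; cbn [rsum]; [ring |].
  rewrite IH; simpl pow; ring.
Qed.

Lemma rsum_alternating_succ (f g : nat -> R) m n :
  rsum (fun l => (-1) ^ (m + l) * f l * g l) m (S n)
  = f m * g m - rsum (fun l => (-1) ^ (S m + l) * f l * g l) (S m) n.
Proof.
  cbn [rsum]; rewrite rsum_sign_shift.
  replace (m + m)%nat with (2 * m)%nat by lia; rewrite pow_1_even; ring.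
Qed.

Section AlternatingTail.

Variables (a : R) (K : nat) (b : nat -> nat).
Hypothesis Ha : irrational a.
Hypothesis Hb : forall l, (Z.of_nat (b l) <= cf_a a (S l))%Z.

Definition ost_tail (m n : nat) : R :=
  rsum (fun l => (-1) ^ (m + l) * INR (b l) * ndist (IZR (cf_q a l) * a)) m n.

Lemma digit_mul_theta_add_le m :
  INR (b m) * cf_theta a (S m) + cf_theta a (S (S m)) <= cf_theta a m.
Proof.
  rewrite (cf_theta_rec a Ha m).
  assert (INR (b m) <= IZR (cf_a a (S m))) by (rewrite INR_IZR_INZ; apply IZR_le, Hb).
  pose proof (cf_theta_pos a Ha (S m)); nra.
Qed.

Lemma ost_tail_bounds n m : (1 <= m)%nat ->
  - cf_theta a (S m) <= ost_tail m n
  <= INR (b m) * cf_theta a (S m) + cf_theta a (S (S m)).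
Proof.
  revert m; induction n as [| n IH]; intros m Hm; unfold ost_tail.
  - pose proof (cf_theta_pos a Ha (S m)); pose proof (cf_theta_pos a Ha (S (S m))).
    pose proof (pos_INR (b m)); cbn [rsum]; nra.
  - rewrite rsum_alternating_succ, (ndist_cf_q a Ha m Hm).
    destruct (IH (S m) ltac:(lia)) as [Hlo Hhi]; unfold ost_tail in Hlo, Hhi.
    pose proof (digit_mul_theta_add_le (S m)); pose proof (pos_INR (b m)).
    pose proof (cf_theta_pos a Ha (S m)); nra.
Qed.

Lemma ost_eps_eq k : ost_eps a K b k = - IZR (cf_q a k) * ost_tail (S k) (K - S k).
Proof. unfold ost_eps, ost_tail; rewrite rsum_sign_shift; ring. Qed.

Lemma ost_eps_le k : ost_eps a K b k <= IZR (cf_q a k) * cf_theta a (S (S k)).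
Proof.
  rewrite ost_eps_eq; destruct (ost_tail_bounds (K - S k) (S k) ltac:(lia)).
  pose proof (cf_q_mono a Ha k); nra.
Qed.

Lemma ost_eps_ge k :
  - IZR (cf_q a k) * (INR (b (S k)) * cf_theta a (S (S k)) + cf_theta a (S (S (S k))))
  <= ost_eps a K b k.
Proof.
  rewrite ost_eps_eq; destruct (ost_tail_bounds (K - S k) (S k) ltac:(lia)).
  pose proof (cf_q_mono a Ha k); nra.
Qed.

Lemma ost_eps_ge_of_digit_lt k : (Z.of_nat (b (S k)) < cf_a a (S (S k)))%Z ->
  - IZR (cf_q a k) * cf_theta a (S k) + IZR (cf_q a k) * cf_theta a (S (S k))
  <= ost_eps a K b k.
Proof.
  intros Hlt; pose proof (ost_eps_ge k).
  assert (INR (b (S k)) <= IZR (cf_a a (S (S k))) - 1).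
  { rewrite INR_IZR_INZ, <- minus_IZR; apply IZR_le; lia. }
  pose proof (cf_theta_rec a Ha (S k)); pose proof (cf_theta_pos a Ha (S (S k))).
  assert (Hw : INR (b (S k)) * cf_theta a (S (S k)) + cf_theta a (S (S (S k)))
               <= cf_theta a (S k) - cf_theta a (S (S k))) by nra.
  pose proof (cf_q_mono a Ha k); nra.
Qed.

Lemma ost_eps_ge_delta k delta : 0 < delta ->
  INR (b (S k)) <= (1 - delta) * IZR (cf_a a (S (S k))) ->
  ost_eps a K b k >= - (1 - delta / 3) * IZR (cf_q a k) * cf_theta a (S k).
Proof.
  intros Hd Hbd; pose proof (ost_eps_ge k).
  pose proof (cf_theta_rec a Ha (S k)) as Hrec; pose proof (cf_theta_lt a Ha (S (S k))).
  pose proof (cf_theta_pos a Ha (S (S (S k)))); pose proof (cf_a_ge1 a Ha (S k)).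
  pose proof (cf_q_mono a Ha k).
  set (A := IZR (cf_a a (S (S k)))) in *.
  set (d1 := cf_theta a (S (S k))) in *; set (d2 := cf_theta a (S (S (S k)))) in *.
  assert (INR (b (S k)) * d1 <= (1 - delta) * A * d1) by (apply Rmult_le_compat_r; lra).
  assert (0 <= delta * (2 * A * d1 - d2)) by (apply Rmult_le_pos; nra).
  assert (Hw : INR (b (S k)) * d1 + d2 <= (1 - delta / 3) * cf_theta a (S k))
    by (rewrite Hrec; lra).
  nra.
Qed.

End AlternatingTail.

Lemma ostrowski_digit_succ_lt a N K b k :
  is_ostrowski a N K b -> (1 <= b k)%nat -> (Z.of_nat (b (S k)) < cf_a a (S (S k)))%Z.
Proof.
  intros [_ [_ [Hle [Hmax _]]]] Hk.
  destruct (Z.eq_dec (Z.of_nat (b (S k))) (cf_a a (S (S k)))) as [E | E].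
  - pose proof (Hmax (S k) ltac:(lia) E); replace (S k - 1)%nat with k in * by lia; lia.
  - specialize (Hle (S k)); lia.
Qed.

Lemma ostrowski_ndist_cf_q a N K b k : irrational a -> is_ostrowski a N K b ->
  (1 <= b k)%nat -> ndist (IZR (cf_q a k) * a) = cf_theta a (S k).
Proof.
  intros Ha [_ [Hb0 _]] Hk; destruct k as [| k].
  - apply (ndist_cf_q0 a Ha); lia.
  - apply (ndist_cf_q a Ha); lia.
Qed.

Theorem lemma1 (alpha : R) (N K : nat) (b : nat -> nat) :
  irrational alpha ->
  is_ostrowski alpha N K b ->
  (forall k : nat, (1 <= b k)%nat ->
     -1 < - IZR (cf_q alpha k) * ndist (IZR (cf_q alpha k) * alpha)
          + IZR (cf_q alpha k) * ndist (IZR (cf_q alpha (S k)) * alpha)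
     /\ - IZR (cf_q alpha k) * ndist (IZR (cf_q alpha k) * alpha)
          + IZR (cf_q alpha k) * ndist (IZR (cf_q alpha (S k)) * alpha)
        <= ost_eps alpha K b k
     /\ ost_eps alpha K b k <= IZR (cf_q alpha k) * ndist (IZR (cf_q alpha (S k)) * alpha)
     /\ IZR (cf_q alpha k) * ndist (IZR (cf_q alpha (S k)) * alpha) < 1 / 2)
  /\
  (forall (k : nat) (delta : R), (1 <= b k)%nat -> 0 < delta ->
     INR (b (S k)) <= (1 - delta) * IZR (cf_a alpha (S (S k))) ->
     ost_eps alpha K b k >= - (1 - delta / 3) * IZR (cf_q alpha k) * ndist (IZR (cf_q alpha k) * alpha))
  /\
  (forall (k0 : nat) (T : R), (1 <= k0)%nat -> 1 <= T ->
     (forall j : nat, (k0 <= j)%nat -> ln (IZR (cf_a alpha j)) / IZR (cf_a alpha (S j)) <= T) ->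
     forall k : nat, (k0 <= k)%nat -> (1 <= b k)%nat ->
       ost_eps alpha K b k >= - (1 - 1 / (exp T + 2))).
Proof.
  intros Ha Ho.
  assert (Hb : forall l, (Z.of_nat (b l) <= cf_a alpha (S l))%Z) by apply Ho.
  assert (Hlow : forall k, (1 <= b k)%nat ->
    - IZR (cf_q alpha k) * cf_theta alpha (S k) + IZR (cf_q alpha k) * cf_theta alpha (S (S k))
    <= ost_eps alpha K b k).
  { intros k Hk; apply (ost_eps_ge_of_digit_lt alpha K b Ha Hb), (ostrowski_digit_succ_lt _ N K);
      assumption. }
  assert (Hnonneg : forall k, 0 <= IZR (cf_q alpha k) * cf_theta alpha (S (S k))).
  { intros k; pose proof (cf_q_mono alpha Ha k); pose proof (cf_theta_pos alpha Ha (S (S k))); nra. }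
  split; [| split].
  - intros k Hk.
    rewrite (ostrowski_ndist_cf_q alpha N K b k Ha Ho Hk), (ndist_cf_q alpha Ha (S k)) by lia.
    pose proof (Hlow k Hk); pose proof (Hnonneg k); pose proof (ost_eps_le alpha K b Ha Hb k).
    pose proof (cf_q_mul_theta_lt1 alpha Ha k); pose proof (cf_q_mul_theta_lt_half alpha Ha k).
    lra.
  - intros k delta Hk Hd Hbd.
    rewrite (ostrowski_ndist_cf_q alpha N K b k Ha Ho Hk).
    exact (ost_eps_ge_delta alpha K b Ha Hb k delta Hd Hbd).
  - intros k0 T Hk0 _ HT k Hk Hbk.
    pose proof (Hlow k Hbk); pose proof (Hnonneg k).
    pose proof (cf_q_mul_theta_le_exp alpha Ha k T ltac:(lia) (HT k Hk)).
    lra.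
Qed.
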